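(* Let $\mathcal H$ be an $n$-vertex linear hypergraph and let $t := e(\mathcal H) - n$. If $e_1,\dots,e_{2t} \in \mathcal H$ are distinct, pairwise intersecting edges such that $\{e_{2i-1},e_{2i}\}$ is a useful pair for each $i\in[t]$, then $\mathcal H$ has a proper edge-colouring with $n$ colours in which each colour is assigned to at most two edges.
   Context: A hypergraph has a finite vertex set and a set of nonempty edges; linear means any two distinct edges share at most one vertex; $e(\mathcal H)$ is the number of edges. For an edge $e$, $N(e)$ denotes the set of edges $f \ne e$ of $\mathcal H$ with $f\cap e\neq\varnothing$. In an $n$-vertex hypergraph, a pair $\{e,f\}\subseteq\mathcal H$ is useful if $e\ne f$, $e\cap f\ne\varnothing$, and $|N(e)\cap N(f)| \le n-2$. A proper edge-colouring assigns colours to edges so that distinct intersecting edges get different colours. *)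

From mathcomp Require Import all_boot.
Set Implicit Arguments. Unset Strict Implicit. Unset Printing Implicit Defensive.

Section Hyper.
Variable V : finType.
Implicit Types (H : {set {set V}}) (e f : {set V}).

Definition hypergraph H : Prop := forall e, e \in H -> e != set0.

Definition linear H : Prop :=
  forall e f, e \in H -> f \in H -> e != f -> #|e :&: f| <= 1.

Definition nbhd H e : {set {set V}} :=
  [set f in H | (f != e) && (f :&: e != set0)].

(* useful pair in an n-vertex hypergraph, n = #|V|;
   |N(e) ∩ N(f)| <= n - 2 written as |N(e) ∩ N(f)| + 2 <= n (no truncation) *)
Definition useful_pair H e f : Prop :=
  [/\ e \in H, f \in H, e != f, e :&: f != set0 &
      #|nbhd H e :&: nbhd H f| + 2 <= #|V|].

Definition proper_colouring H (k : nat) (c : {set V} -> nat) : Prop :=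
  (forall e, e \in H -> c e < k) /\
  (forall e f, e \in H -> f \in H -> e != f -> e :&: f != set0 -> c e != c f).
End Hyper.

From mathcomp Require Import all_boot zify.

Set Implicit Arguments.
Unset Strict Implicit.
Unset Printing Implicit Defensive.

(* For the i-th useful pair {e_2i, e_2i+1}, call an edge an avoider if it is
   disjoint from e_2i or from e_2i+1.  Every edge is an avoider, a common
   neighbour of the pair, or one of e_2i, e_2i+1; usefulness bounds the last
   two kinds by n, so there are at least t avoiders (useful_pair_avoiders).
   Hence one can greedily pick distinct avoiders g_0, ..., g_{t-1}
   (greedy_distinct_representatives).  Let a_i be the edge of the i-th pair
   that g_i misses; since the e_j are distinct and pairwise intersecting, the
   a_i are distinct and different from every g_k (disjoint_partners).
   Finally, any t disjoint couples {a_i, g_i} of non-conflicting elements of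
   a finite set H yield a colouring with e(H) - t <= n colours: couple i gets
   colour i and the remaining edges get pairwise distinct fresh colours
   (section PairColouring). *)

Lemma greedy_distinct_representatives (I T : finType) (x0 : T) (C : I -> {set T}) :
  (forall i, #|I| <= #|C i|) ->
  exists2 g : I -> T, injective g & forall i, g i \in C i.
Proof.
move=> C_big.
suff on_subsets k (A : {set I}) : #|A| = k ->
    exists2 g : I -> T, {in A &, injective g} & {in A, forall i, g i \in C i}.
  have [g g_inj gC] := on_subsets _ [set: I] erefl.
  by exists g => [i j|i]; [apply: g_inj | apply: gC]; rewrite inE.
elim: k A => [|k IH] A cardA.
  by exists (fun=> x0) => [i j|i]; rewrite (cards0_eq cardA) inE.
have [i iA] : exists i, i \in A by apply/card_gt0P; rewrite cardA.
have cardAi : #|A :\ i| = k by move: cardA; rewrite (cardsD1 i A) iA; lia.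
have [g g_inj gC] := IH (A :\ i) cardAi.
have [x xC x_new] : exists2 x, x \in C i & x \notin g @: (A :\ i).
  apply/subsetPn/negP => /subset_leq_card le_C.
  have := leq_trans (C_big i) le_C; have := leq_imset_card g (A :\ i).
  have := max_card A; lia.
have x_neq j : j \in A -> j != i -> x != g j.
  by move=> jA ji; apply: contraNneq x_new => ->; apply: imset_f; rewrite !inE ji.
exists (fun j => if j == i then x else g j) => [j1 j2 j1A j2A|j jA].
  case: eqP => [->|/eqP j1i]; case: eqP => [->|/eqP j2i] //.
  - by move/eqP; rewrite (negbTE (x_neq _ j2A j2i)).
  - by move/esym/eqP; rewrite (negbTE (x_neq _ j1A j1i)).
  - by apply: g_inj; rewrite !inE ?j1i ?j2i.
by case: eqP => [->|/eqP ji] //; apply: gC; rewrite !inE ji.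
Qed.

Section PairColouring.
Variables (T : finType) (H : {set T}) (t : nat) (a g : 'I_t -> T).
Hypotheses (a_inj : injective a) (g_inj : injective g).
Hypotheses (a_neq_g : forall i j, a i != g j).
Hypotheses (aH : forall i, a i \in H) (gH : forall i, g i \in H).

Definition pair_of (x : T) : option 'I_t := [pick i | x \in [set a i; g i]].

Definition matched : {set T} := [set a i | i : 'I_t] :|: [set g i | i : 'I_t].

Definition unmatched : seq T := enum (H :\: matched).

Definition pair_colour (x : T) : nat :=
  if pair_of x is Some i then nat_of_ord i else t + index x unmatched.

Lemma pair_unique i j x : x \in [set a i; g i] -> x \in [set a j; g j] -> i = j.
Proof.
case/set2P=> ->; case/set2P; do ?[exact: a_inj | exact: g_inj];
  by [move/eqP; rewrite (negbTE (a_neq_g _ _)) | move/esym/eqP; rewrite (negbTE (a_neq_g _ _))].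
Qed.

Lemma card_matched : #|matched| = 2 * t.
Proof.
have disj : [set a i | i : 'I_t] :&: [set g i | i : 'I_t] = set0.
  apply/setP => x; rewrite !inE; apply/andP => -[/imsetP[i _ ->] /imsetP[j _ /eqP]].
  by rewrite (negbTE (a_neq_g i j)).
by rewrite cardsU disj cards0 !card_imset // card_ord; lia.
Qed.

Lemma matched_sub : matched \subset H.
Proof. by apply/subsetP => x /setUP[] /imsetP[i _ ->]. Qed.

Lemma in_unmatched x : x \in H -> pair_of x = None -> x \in unmatched.
Proof.
move=> xH; rewrite /pair_of; case: pickP => // no_pair _.
rewrite mem_enum !inE xH andbT; apply/orP => -[] /imsetP[i _ xE];
  by have := no_pair i; rewrite xE !inE eqxx ?orbT.
Qed.

Lemma size_unmatched : size unmatched = #|H| - 2 * t.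
Proof. by rewrite /unmatched -cardE cardsD (setIidPr matched_sub) card_matched. Qed.

Lemma pair_of_mem x i : pair_of x = Some i -> x \in [set a i; g i].
Proof. by rewrite /pair_of; case: pickP => // j xj [<-]. Qed.

Lemma pair_colour_pair x i : x \in [set a i; g i] -> pair_colour x = i.
Proof.
rewrite /pair_colour /pair_of => xi.
by case: pickP => [j xj|/(_ i)]; [rewrite (pair_unique xj xi) | rewrite xi].
Qed.

Lemma pair_colour_lt x : x \in H -> pair_colour x < #|H| - t.
Proof.
move=> xH; have := size_unmatched; have := subset_leq_card matched_sub.
rewrite card_matched /pair_colour; case Ex: (pair_of x) => [i|] le2t size_u.
  by have := ltn_ord i; lia.
have : index x unmatched < size unmatched by rewrite index_mem in_unmatched.
lia.
Qed.

Lemma pair_colour_eq x y : x \in H -> y \in H -> x != y ->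
  pair_colour x = pair_colour y -> exists i, x \in [set a i; g i] /\ y \in [set a i; g i].
Proof.
move=> xH yH xy; rewrite /pair_colour.
case Ex: (pair_of x) => [i|]; case Ey: (pair_of y) => [j|].
- by move/val_inj => ij; subst j; exists i; split; exact: pair_of_mem.
- by have := ltn_ord i; lia.
- by have := ltn_ord j; lia.
move/addnI/index_inj => xEy.
by rewrite xEy ?eqxx ?in_unmatched in xy.
Qed.

Lemma pair_colour_class k : #|[set x in H | pair_colour x == k]| <= 2.
Proof.
case: (ltnP k t) => [kt|tk].
  apply: leq_trans (_ : #|[set a (Ordinal kt); g (Ordinal kt)]| <= 2);
    last by rewrite cards2 ltnS leq_b1.
  apply/subset_leq_card/subsetP => x; rewrite inE /pair_colour => /andP[_].
  case Ex: (pair_of x) => [i|] /eqP xk; last by lia.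
  have -> : Ordinal kt = i by apply: val_inj.
  exact: pair_of_mem.
apply: leq_trans (_ : _ <= 1) _ => //; apply/card_le1_eqP => x y.
rewrite !inE => /andP[xH /eqP xk] /andP[yH /eqP yk].
case: (eqVneq x y) => // xy; have [i [xi _]] := pair_colour_eq xH yH xy (etrans xk (esym yk)).
by have := ltn_ord i; rewrite -(pair_colour_pair xi) xk; lia.
Qed.

Lemma pair_colour_proper (r : rel T) :
  symmetric r -> (forall i, ~~ r (a i) (g i)) ->
  forall x y, x \in H -> y \in H -> x != y -> r x y -> pair_colour x != pair_colour y.
Proof.
move=> r_sym r_ag x y xH yH xy rxy; apply/eqP => /(pair_colour_eq xH yH xy) [i [xi yi]].
move: xi yi xy rxy => /set2P[]-> /set2P[]->; rewrite ?eqxx // => _.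
  all: by rewrite ?[r (g i) _]r_sym (negbTE (r_ag i)).
Qed.

End PairColouring.

Section Avoiders.
Variable V : finType.
Implicit Types (H : {set {set V}}) (e f : {set V}).

Definition avoiders H e f : {set {set V}} :=
  [set x in H | (x :&: e == set0) || (x :&: f == set0)].

(* For a useful pair, all but at most n edges are avoiders: the others are
   common neighbours of e and f, or e, f themselves. *)
Lemma useful_pair_avoiders H e f :
  useful_pair H e f -> #|H| <= #|avoiders H e f| + #|V|.
Proof.
case=> _ _ _ _ small_common.
have cover : H \subset avoiders H e f :|: (nbhd H e :&: nbhd H f) :|: [set e; f].
  apply/subsetP => x xH; rewrite !inE xH /=.
  case: (eqVneq x e) => [_|xe]; first by rewrite !orbT.
  case: (eqVneq x f) => [_|xf]; first by rewrite !orbT.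
  by case: (x :&: e == set0); case: (x :&: f == set0).
have cardU (A B : {set {set V}}) : #|A :|: B| <= #|A| + #|B|.
  by rewrite cardsU leq_subr.
have := leq_trans (subset_leq_card cover) (cardU _ _).
have := cardU (avoiders H e f) (nbhd H e :&: nbhd H f).
rewrite cards2; have := leq_b1 (e != f); lia.
Qed.

(* Given distinct pairwise intersecting edges e_0, ..., e_{2t-1} and, for each
   i, an avoider g i of the couple {e_2i, e_2i+1}, the edge a i of that couple
   missed by g i yields t distinct edges, each disjoint from its g i, and none
   equal to any g k (a i meets a k, while g k misses it). *)
Lemma disjoint_partners H (t : nat) (e : nat -> {set V}) (g : 'I_t -> {set V}) :
  (forall i, i < 2 * t -> e i \in H) ->
  (forall i j, i < 2 * t -> j < 2 * t -> i != j -> e i != e j) ->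
  (forall i j, i < 2 * t -> j < 2 * t -> e i :&: e j != set0) ->
  (forall i, g i \in avoiders H (e (2 * i)) (e (2 * i).+1)) ->
  exists a : 'I_t -> {set V},
    [/\ injective a, forall i, a i \in H, forall i, a i :&: g i = set0
      & forall i k, a i != g k].
Proof.
move=> eH e_neq e_meet gC.
pose p (i : 'I_t) := if g i :&: e (2 * i) == set0 then 2 * i else (2 * i).+1.
have p_lt i : p i < 2 * t by have := ltn_ord i; rewrite /p; case: ifP; lia.
have p_inj : injective p.
  by move=> i k pik; apply: ord_inj; move: pik; rewrite /p; do 2 case: ifP => _; lia.
have ag0 i : e (p i) :&: g i = set0.
  have := gC i; rewrite inE /p => /andP[_]; rewrite setIC.
  by case: ifP => [/eqP|_ /= /eqP]; rewrite setIC.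
exists (fun i => e (p i)); split => [i k eik|i|//|i k].
- apply/p_inj/eqP; apply: contraT => pik.
  by have := e_neq _ _ (p_lt i) (p_lt k) pik; rewrite eik eqxx.
- exact: eH.
- apply: contraTneq (e_meet _ _ (p_lt i) (p_lt k)) => ->.
  by rewrite setIC ag0 eqxx.
Qed.
End Avoiders.

Theorem proposition5p3 (V : finType) (H : {set {set V}})
  (e : nat -> {set V}) :
  hypergraph H -> linear H ->
  let n := #|V| in
  let t := #|H| - n in
  (forall i, i < 2 * t -> e i \in H) ->
  (forall i j, i < 2 * t -> j < 2 * t -> i != j -> e i != e j) ->
  (forall i j, i < 2 * t -> j < 2 * t -> e i :&: e j != set0) ->
  (forall i, i < t -> useful_pair H (e (2 * i)) (e (2 * i).+1)) ->
  exists c : {set V} -> nat,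
    proper_colouring H n c /\
    (forall k, k < n -> #|[set f in H | c f == k]| <= 2).
Proof.
move=> _ _ n t eH e_neq e_meet e_useful.
pose C (i : 'I_t) := avoiders H (e (2 * i)) (e (2 * i).+1).
have C_big i : #|'I_t| <= #|C i|.
  by have := useful_pair_avoiders (e_useful i (ltn_ord i)); rewrite card_ord /C /t /n; lia.
have [g g_inj gC] := greedy_distinct_representatives set0 C_big.
have gH i : g i \in H by have := gC i; rewrite inE => /andP[].
have [a [a_inj aH ag0 a_neq_g]] := disjoint_partners eH e_neq e_meet gC.
have meet_sym : symmetric (fun x y : {set V} => x :&: y != set0).
  by move=> x y; rewrite setIC.
have ag_disjoint i : ~~ (a i :&: g i != set0) by rewrite ag0 eqxx.
have few_colours : #|H| - t <= n by rewrite /t; lia.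
exists (pair_colour H a g); split; first split.
- move=> x xH; apply: leq_trans few_colours.
  exact: pair_colour_lt a_inj g_inj a_neq_g aH gH x xH.
- exact: pair_colour_proper meet_sym ag_disjoint.
- by move=> k _; apply: pair_colour_class a_inj g_inj a_neq_g k.
Qed.
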